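(* Let $S$ be an upper semilattice. Then there exists no upper semilattice homomorphism from any subsemilattice $S_0\subseteq S$ onto $\mathrm{Id}(S)$.
   Context: For an upper semilattice (join-semilattice) $S$, an ideal of $S$ is a (possibly empty) upward directed downset of $S$ (downset: $x\le y\in d\Rightarrow x\in d$), equivalently a possibly empty subset closed under finite joins and downward closed. $\mathrm{Id}(S)$ denotes the set of all ideals of $S$, including $\emptyset$, ordered by inclusion; it is a complete lattice, regarded here as an upper semilattice under its join (the join of two ideals is the ideal generated by their union). A subsemilattice of $S$ is a subset closed under binary joins. *)

From HB Require Import structures.
From mathcomp Require Import all_boot all_order.
Set Implicit Arguments. Unset Strict Implicit. Unset Printing Implicit Defensive.
Import Order.TTheory.
Local Open Scope order_scope.

Definition subsemilattice d (S : joinSemilatticeType d) (S0 : S -> Prop) : Prop :=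
  forall x y, S0 x -> S0 y -> S0 (x `|` y).

(* An ideal: a (possibly empty) upward directed downset. *)
Definition is_ideal d (S : joinSemilatticeType d) (I : S -> Prop) : Prop :=
  (forall x y : S, x <= y -> I y -> I x) /\
  (forall x y : S, I x -> I y -> exists z, I z /\ x <= z /\ y <= z).

Definition ideal_join d (S : joinSemilatticeType d) (I J : S -> Prop) : S -> Prop :=
  fun z => forall K : S -> Prop, is_ideal K ->
    (forall x, I x -> K x) -> (forall x, J x -> K x) -> K z.

Definition set_eq (T : Type) (A B : T -> Prop) : Prop := forall x, A x <-> B x.

From HB Require Import structures.
From mathcomp Require Import all_boot all_order.
From mathcomp Require Import classical_sets.
Set Implicit Arguments.
Unset Strict Implicit.
Unset Printing Implicit Defensive.
Import Order.TTheory.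
Local Open Scope order_scope.

(* A diagonal argument refined by Zorn's lemma.  Call a directed set D of
   elements x of S0 with x \notin f x admissible when every f x (x in D) lies in
   the ideal generated by D, and take a maximal admissible D.  If f a is the
   ideal generated by D, then a is not in that ideal (else a <= z for some z in
   D and z \in f a \subseteq f z), so f (a \/ z) = f a \/ f z still lies in it
   and a \/ z escapes it; adjoining a and all a \/ z to D contradicts
   maximality. *)

Section Ideals.
Context {d : Order.disp_t} {S : joinSemilatticeType d}.

Definition directed (D : S -> Prop) : Prop :=
  forall x y, D x -> D y -> exists z, D z /\ x <= z /\ y <= z.

Definition down (D : S -> Prop) : S -> Prop := fun y => exists z, D z /\ y <= z.

Lemma down_ideal (D : S -> Prop) : directed D -> is_ideal (down D).
Proof.
move=> dirD; split=> [x y xy [z [Dz yz]]|x y [z1 [Dz1 xz1]] [z2 [Dz2 yz2]]].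
  by exists z; split=> //; apply: le_trans yz.
have [z [Dz [z1z z2z]]] := dirD _ _ Dz1 Dz2.
exists z; split; first by exists z.
by split; [apply: le_trans z1z | apply: le_trans z2z].
Qed.

Lemma ideal_joinl (I J : S -> Prop) x : I x -> ideal_join I J x.
Proof. by move=> Ix K _ IK _; apply: IK. Qed.

Definition adjoin_join (D : S -> Prop) (a : S) : S -> Prop :=
  fun x => D x \/ x = a \/ exists z, D z /\ x = a `|` z.

Lemma adjoin_join_directed (D : S -> Prop) a :
  directed D -> directed (adjoin_join D a).
Proof.
move=> dirD.
have below x : adjoin_join D a x -> x = a \/ exists z, D z /\ x <= a `|` z.
  case=> [Dx|[->|[z [Dz ->]]]]; [right; exists x; split=> //; exact: leUr|by left|].
  by right; exists z.
have top z : D z -> adjoin_join D a (a `|` z) by right; right; exists z.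
move=> x y /below[->|[z1 [Dz1 xz1]]] /below[->|[z2 [Dz2 yz2]]].
- by exists a; split=> //; right; left.
- by exists (a `|` z2); split; [exact: top | split=> //; exact: leUl].
- by exists (a `|` z1); split; [exact: top | split=> //; exact: leUl].
- have [z [Dz [z1z z2z]]] := dirD _ _ Dz1 Dz2.
  exists (a `|` z); split; first exact: top.
  by split; [exact: le_trans xz1 (leU2 (lexx a) z1z)
            | exact: le_trans yz2 (leU2 (lexx a) z2z)].
Qed.

End Ideals.

Section JoinHomomorphismOntoIdeals.
Context {d : Order.disp_t} {S : joinSemilatticeType d}.
Variables (S0 : S -> Prop) (f : S -> S -> Prop).
Hypothesis S0_join : subsemilattice S0.
Hypothesis f_join :
  forall x y, S0 x -> S0 y -> set_eq (f (x `|` y)) (ideal_join (f x) (f y)).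

Lemma f_mono x y : S0 x -> S0 y -> x <= y -> forall z, f x z -> f y z.
Proof.
move=> S0x S0y xy z fxz; have -> : y = x `|` y by apply/esym/join_r.
by apply/f_join => //; apply: ideal_joinl.
Qed.

Definition admissible (D : S -> Prop) : Prop :=
  [/\ forall x, D x -> S0 x /\ ~ f x x,
      directed D &
      forall x y, D x -> f x y -> down D y].

Lemma admissible_bigcup (F : set (set S)) :
  (F `<=` admissible)%classic -> total_on F subset ->
  admissible (\bigcup_(X in F) X)%classic.
Proof.
move=> Fadm Ftot; split.
- by move=> x [X FX Xx]; case: (Fadm _ FX) => + _ _; apply.
- move=> x y [X FX Xx] [Y FY Yy].
  have [Z [FZ XZ YZ]] : exists Z, [/\ F Z, (X `<=` Z)%classic & (Y `<=` Z)%classic].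
    by case: (Ftot _ _ FX FY) => [XY|YX]; [exists Y | exists X]; split.
  case: (Fadm _ FZ) => _ /(_ x y (XZ _ Xx) (YZ _ Yy)) [z [Zz xyz]] _.
  by exists z; split=> //; exists Z.
- move=> x y [X FX Xx] fxy.
  case: (Fadm _ FX) => _ _ /(_ x y Xx fxy) [z [Xz yz]].
  by exists z; split=> //; exists X.
Qed.

Lemma down_not_preimage (D : S -> Prop) a :
  admissible D -> S0 a -> set_eq (f a) (down D) -> ~ down D a.
Proof.
case=> Dgood _ _ S0a faD [z [Dz az]].
have [S0z nfzz] := Dgood _ Dz.
apply/nfzz/(f_mono S0a S0z az)/faD; by exists z.
Qed.

Lemma adjoin_join_admissible (D : S -> Prop) a :
  admissible D -> S0 a -> set_eq (f a) (down D) ->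
  admissible (adjoin_join D a).
Proof.
move=> admD S0a faD; have nDa := down_not_preimage admD S0a faD.
case: admD => Dgood dirD Dclosed.
have fD x : adjoin_join D a x -> forall y, f x y -> down D y.
  case=> [Dx|[->|[z [Dz ->]]]] y; [exact: Dclosed | by move/faD|].
  have S0z := (Dgood _ Dz).1.
  move/(f_join S0a S0z); apply; first exact: down_ideal.
    by move=> u /faD.
  by move=> u; apply: Dclosed.
split.
- move=> x D'x; case: (D'x) => [/Dgood //|[->|[z [Dz x_az]]]].
    by split=> // /faD.
  subst x.
  split; first by apply: S0_join => //; exact: (Dgood _ Dz).1.
  move=> fxx; have [w [Dw aw]] := fD _ D'x _ fxx.
  apply: nDa; exists w; split=> //.
  exact: le_trans (leUl _ _) aw.
- exact: adjoin_join_directed.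
- move=> x y D'x fxy; have [z [Dz yz]] := fD _ D'x _ fxy.
  by exists z; split=> //; left.
Qed.

Lemma not_onto_ideals :
  ~ forall I : S -> Prop, is_ideal I -> exists x, S0 x /\ set_eq (f x) I.
Proof.
move=> f_onto.
have [D [admD Dmax]] : exists D, admissible D /\
    forall B, (D `<` B)%classic -> ~ admissible B.
  by apply: Zorn_bigcup => F; apply: admissible_bigcup.
have [_ dirD _] := admD.
have [a [S0a faD]] := f_onto _ (down_ideal dirD).
apply: (Dmax (adjoin_join D a)); last exact: adjoin_join_admissible.
split=> [x Dx|sub]; first by left.
apply: (down_not_preimage admD S0a faD); exists a; split=> //.
by apply: sub; right; left.
Qed.

End JoinHomomorphismOntoIdeals.

Theorem theorem3p1 (d : Order.disp_t) (S : joinSemilatticeType d) :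
  ~ exists (S0 : S -> Prop) (f : S -> (S -> Prop)),
      subsemilattice S0 /\
      (forall x, S0 x -> is_ideal (f x)) /\
      (forall x y, S0 x -> S0 y -> set_eq (f (x `|` y)) (ideal_join (f x) (f y))) /\
      (forall I : S -> Prop, is_ideal I -> exists x, S0 x /\ set_eq (f x) I).
Proof.
move=> [S0 [f [S0_join [_ [f_join f_onto]]]]].
exact: (not_onto_ideals S0_join f_join f_onto).
Qed.
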